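(* Let $q$ be a prime power, $L$ an integer with $1\le L<q$, and $r\in[0,\frac{L}{L+1})$ with $rn\in\mathbb{N}$. If $C\subseteq\mathbb{F}_q^n$ is a linear $(r,L)$ list-decodable code, then $d(C)>rn+\lfloor\frac{rn}{L}\rfloor$.
   Context: A linear code is a subspace of $\mathbb{F}_q^n$; $d(C)$ is its minimum Hamming distance between distinct codewords. $C$ is $(r,L)$ list-decodable if every Hamming ball of radius $rn$ in $\mathbb{F}_q^n$ contains at most $L$ codewords. *)

From HB Require Import structures.
From mathcomp Require Import all_boot all_order all_algebra all_field.
Set Implicit Arguments. Unset Strict Implicit. Unset Printing Implicit Defensive.
Import Order.TTheory GRing.Theory Num.Theory.

Definition hamming (F : eqType) (n : nat) (x y : 'rV[F]_n) : nat :=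
  #|[set i : 'I_n | x ord0 i != y ord0 i]|.

Definition list_decodable (R : realFieldType) (F : finFieldType) (n : nat)
    (C : {vspace 'rV[F]_n}) (r : R) (L : nat) : Prop :=
  forall y : 'rV[F]_n,
    #|[set c : 'rV[F]_n | (c \in C) && ((hamming y c)%:R <= r * n%:R)%R]| <= L.

(* d(C) > k, where d(C) is the minimum Hamming distance between distinct
   codewords (d(C) = +oo by convention if C has fewer than two codewords). *)
Definition min_dist_gt (F : finFieldType) (n : nat) (C : {vspace 'rV[F]_n})
    (k : nat) : Prop :=
  forall x y : 'rV[F]_n, x \in C -> y \in C -> x != y -> k < hamming x y.

From HB Require Import structures.
From mathcomp Require Import all_boot all_order all_algebra all_field.
From mathcomp Require Import zify.

Set Implicit Arguments.
Unset Strict Implicit.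
Unset Printing Implicit Defensive.
Import Order.TTheory GRing.Theory Num.Theory.

(* A nonzero codeword c of weight w <= t + t/L is split into L+1 blocks of its
   support, each of size at least w - t.  With L+1 distinct scalars a_i, the
   word z equal to a_i c on the i-th block lies within distance t of each of
   the L+1 distinct codewords a_i c, so the ball of radius t around z contains
   too many codewords.  Hence every nonzero codeword, and thus every difference
   of two distinct codewords, has weight greater than t + t/L. *)

Lemma subset_card_eq (T : finType) (S : {set T}) (m : nat) :
  m <= #|S| -> exists2 A : {set T}, A \subset S & #|A| = m.
Proof.
move=> /card_geqP[s [uniq_s size_s sS]]; exists [set x in s].
  by apply/subsetP=> x; rewrite inE => /sS.
by rewrite cardsE; move/card_uniqP: uniq_s ->.
Qed.

Lemma exists_fibres_card_ge (T : finType) (S : {set T}) (K m : nat) :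
  K * m <= #|S| ->
  exists f : T -> nat, forall i, i < K -> m <= #|[set k in S | f k == i]|.
Proof.
elim: K S => [|K IHK] S; first by exists (fun _ => 0).
rewrite mulSn => leS.
have [A AS cardA] := subset_card_eq (leq_trans (leq_addr _ _) leS).
have [f Hf] : exists f : T -> nat,
    forall i, i < K -> m <= #|[set k in S :\: A | f k == i]|.
  by apply: IHK; rewrite cardsD (setIidPr AS) cardA; lia.
exists (fun k => if k \in A then K else f k) => i.
rewrite ltnS leq_eqVlt => /predU1P[-> | ltiK].
  rewrite -cardA; apply/subset_leq_card/subsetP=> k kA.
  by rewrite inE kA eqxx (subsetP AS).
apply: leq_trans (Hf i ltiK) (subset_leq_card _); apply/subsetP=> k.
by rewrite !inE => /andP[/andP[/negPf-> ->]].
Qed.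

Section HammingWeight.

Variables (F : finFieldType) (n : nat).
Implicit Types (x y c : 'rV[F]_n) (A : {set 'I_n}).

Definition supp c : {set 'I_n} := [set i | c ord0 i != 0%R].

Lemma hamming_supp x y : hamming x y = #|supp (y - x)|.
Proof.
by apply: eq_card => i; rewrite !inE !mxE subr_eq0 eq_sym.
Qed.

Lemma hamming_le_card x y A :
  (forall i, i \notin A -> x ord0 i = y ord0 i) -> hamming x y <= #|A|.
Proof.
move=> eq_out; apply/subset_leq_card/subsetP=> i; rewrite inE.
by apply: contraR => /eq_out->.
Qed.

Lemma hamming_blockwise_scale (a : nat -> F) (f : 'I_n -> nat) c i :
  hamming (\row_k (a (f k) * c ord0 k)%R) (a i *: c)
    <= #|supp c| - #|[set k in supp c | f k == i]|.
Proof.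
have sub : [set k in supp c | f k == i] \subset supp c.
  by apply/subsetP=> k; rewrite inE => /andP[].
rewrite -(setIidPr sub) -cardsD; apply: hamming_le_card => k.
rewrite !inE !mxE negb_and !negbK => /orP[/andP[_ /eqP-> //] | /eqP->].
by rewrite !mulr0.
Qed.

End HammingWeight.

Lemma leq_mul_subn_divn (w t L : nat) :
  w <= t + t %/ L -> L.+1 * (w - t) <= w.
Proof.
move=> le_w; have := leq_trunc_div t L.
have : L * (w - t) <= L * (t %/ L) by rewrite leq_mul2l leq_subLR le_w orbT.
lia.
Qed.

Lemma list_decodable_supp_gt (R : realFieldType) (F : finFieldType)
    (n L : nat) (r : R) (t : nat) (C : {vspace 'rV[F]_n}) (c : 'rV[F]_n) :
  L < #|F| -> (r * n%:R = t%:R)%R -> list_decodable C r L ->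
  c \in C -> c != 0%R -> t + t %/ L < #|supp c|.
Proof.
move=> LF rnt decC cC c0; rewrite ltnNge; apply/negP=> le_w.
have [f Hf] := exists_fibres_card_ge (leq_mul_subn_divn le_w).
pose a i : F := nth 0%R (enum F) i.
pose z : 'rV[F]_n := (\row_k (a (f k) * c ord0 k))%R.
have scale_inj : injective (fun j : 'I_L.+1 => (a j *: c)%R).
  move=> j1 j2 /= /eqP; rewrite -subr_eq0 -scalerBl scaler_eq0 (negPf c0).
  have ltF (j : 'I_L.+1) : j < size (enum F) by rewrite -cardE (leq_trans _ LF).
  by rewrite orbF subr_eq0 nth_uniq ?enum_uniq // => /eqP/val_inj.
have ball : [set (a j *: c)%R | j : 'I_L.+1] \subset
    [set c' | (c' \in C) && ((hamming z c')%:R <= r * n%:R)%R].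
  apply/subsetP=> _ /imsetP[j _ ->]; rewrite inE memvZ //= rnt ler_nat.
  apply: leq_trans (hamming_blockwise_scale _ _ _ _) _.
  by have := Hf j (ltn_ord j); lia.
have := leq_trans (subset_leq_card ball) (decC z).
by rewrite card_imset // card_ord ltnn.
Qed.

Theorem proposition6p4 (R : realFieldType) (F : finFieldType) (n L : nat)
    (r : R) (t : nat) (C : {vspace 'rV[F]_n}) :
  1 <= L -> L < #|F| ->
  (0 <= r)%R -> (r < L%:R / (L.+1)%:R)%R ->
  (r * n%:R = t%:R)%R ->
  list_decodable C r L ->
  min_dist_gt C (t + t %/ L).
Proof.
move=> _ LF _ _ rnt decC x y xC yC xy.
rewrite hamming_supp; apply: list_decodable_supp_gt LF rnt decC _ _.
  exact: memvB.
by rewrite subr_eq0 eq_sym.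
Qed.
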